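(* Let $K\ge2$ and let $\mathbf{W},\mathbf{W}'$ be $K\times K$ invertible row-stochastic matrices. Then, entrywise, $$\boldsymbol{\Phi}(\mathbf{W}\mathbf{W}')\ge\boldsymbol{\Phi}(\mathbf{W}),$$ with equality in all $K^2$ entries if and only if $\mathbf{W}'$ is a permutation matrix.
   Context: For an invertible matrix $\mathbf{W}$, $\boldsymbol{\Phi}(\mathbf{W})=\mathbf{W}(\mathbf{W}^{-1}\odot\mathbf{W}^{-1})$, where $\odot$ is the entrywise (Hadamard) product. A matrix inequality $\mathbf{A}\ge\mathbf{B}$ means $A_{k,\ell}\ge B_{k,\ell}$ for all $k,\ell$. *)

From mathcomp Require Import all_boot all_order all_algebra.
Set Implicit Arguments. Unset Strict Implicit. Unset Printing Implicit Defensive.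
Import Order.TTheory GRing.Theory Num.Theory.
Local Open Scope ring_scope.

Definition row_stochastic (R : realFieldType) (K : nat) (W : 'M[R]_K) : Prop :=
  (forall i j, 0 <= W i j) /\ (forall i, \sum_(j < K) W i j = 1).

Definition hadamard (R : pzRingType) (m n : nat) (A B : 'M[R]_(m, n)) : 'M[R]_(m, n) :=
  \matrix_(i, j) (A i j * B i j).

Definition Phi (R : realFieldType) (K : nat) (W : 'M[R]_K) : 'M[R]_K :=
  W *m hadamard (invmx W) (invmx W).

From mathcomp Require Import all_boot all_order all_algebra.
From mathcomp Require Import perm ring.
Set Implicit Arguments. Unset Strict Implicit. Unset Printing Implicit Defensive.
Import Order.TTheory GRing.Theory Num.Theory.
Local Open Scope ring_scope.

(* Put V := (W W')^-1, so that W^-1 = W' V.  Row n of W^-1 is then the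
   W'-weighted mean of the rows of V, and Phi (W W') - Phi W = W D where
   D n l is the variance of column l of V under the distribution given by row n
   of W'.  Since every column of the invertible W has a
   nonzero entry, equality forces all these variances to vanish: each row m of V
   with W' n m <> 0 equals row n of W^-1.  As the rows of V are distinct, row n
   of W' has a single nonzero entry, at some f n, and f is injective because the
   rows of W^-1 are distinct; so W' is the permutation matrix of f. *)

Section Variance.

Variable R : comPzRingType.

Lemma weighted_varianceE (I : finType) (w x : I -> R) :
  \sum_i w i = 1 ->
  \sum_i w i * x i ^+ 2 - (\sum_i w i * x i) ^+ 2 =
  \sum_i w i * (x i - \sum_j w j * x j) ^+ 2.
Proof.
set mu := \sum_j w j * x j => w1.
have expand i : w i * (x i - mu) ^+ 2 =
    w i * x i ^+ 2 - (mu *+ 2 * (w i * x i) - mu ^+ 2 * w i) by ring.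
rewrite (eq_bigr _ (fun i _ => expand i)) !sumrB -!mulr_sumr w1 -/mu.
ring.
Qed.

Definition mxvar m n q (A : 'M[R]_(m, n)) (V : 'M[R]_(n, q)) i l :=
  \sum_j A i j * (V j l - (A *m V) i l) ^+ 2.

Lemma mulmx_hadamard_gap m n p q (M : 'M[R]_(m, n)) (A : 'M[R]_(n, p))
    (V : 'M[R]_(p, q)) k l :
  (forall i, \sum_j A i j = 1) ->
  (M *m A *m hadamard V V) k l - (M *m hadamard (A *m V) (A *m V)) k l =
  \sum_i M k i * mxvar A V i l.
Proof.
move=> A1; rewrite -mulmxA !mxE -sumrB; apply: eq_bigr => i _.
rewrite -mulrBr /mxvar [(A *m V) i l]mxE -weighted_varianceE // !mxE expr2.
by congr (_ * (_ - _)); apply: eq_bigr => j _; rewrite mxE expr2.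
Qed.

Lemma mxvar_perm n q (s : 'S_n) (V : 'M[R]_(n, q)) i l :
  mxvar (perm_mx s) V i l = 0.
Proof.
rewrite /mxvar -row_permE mxE (bigD1 (s i)) //= big1 => [|j /negbTE sj].
  by rewrite !mxE eqxx mul1r subrr expr0n addr0.
by rewrite !mxE eq_sym sj mul0r.
Qed.

End Variance.

Lemma mxvar_ge0 (R : realDomainType) m n q (A : 'M[R]_(m, n))
    (V : 'M[R]_(n, q)) i l :
  (forall i j, 0 <= A i j) -> 0 <= mxvar A V i l.
Proof.
by move=> A0; apply: sumr_ge0 => j _; exact: mulr_ge0 (A0 i j) (sqr_ge0 _).
Qed.

Lemma mxvar_eq0 (R : realDomainType) m n q (A : 'M[R]_(m, n))
    (V : 'M[R]_(n, q)) i l j :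
  (forall i j, 0 <= A i j) -> mxvar A V i l = 0 -> A i j != 0 ->
  V j l = (A *m V) i l.
Proof.
move=> A0 /psumr_eq0P var0 Aij; apply/eqP; rewrite -subr_eq0 -sqrf_eq0.
have /eqP := var0 (fun j _ => mulr_ge0 (A0 i j) (sqr_ge0 _)) j isT.
by rewrite mulf_eq0 (negbTE Aij).
Qed.

Section UnitMatrix.

Variables (R : comUnitRingType) (n : nat).
Implicit Type M : 'M[R]_n.

Lemma mulmx_invmx_mul M N :
  M \in unitmx -> N \in unitmx -> N *m invmx (M *m N) = invmx M.
Proof.
move=> Mu Nu; have MNu : M *m N \in unitmx by rewrite unitmx_mul Mu Nu.
by rewrite -[LHS](mulKmx Mu) (mulmxA M) mulmxV // mulmx1.
Qed.

Lemma unitmx_row_inj M : M \in unitmx -> injective (fun i => row i M).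
Proof.
move=> Mu i j /rowP eq_ij; apply/eqP; apply: contraT => neq_ij.
have eq_rows : M i =1 M j by move=> k; have := eq_ij k; rewrite !mxE.
by move: Mu; rewrite unitmxE (determinant_alternate neq_ij eq_rows) unitr0.
Qed.

Lemma unitmx_col_neq0 M j : M \in unitmx -> exists i, M i j != 0.
Proof.
move=> Mu; apply/existsP; apply: contraT; rewrite negb_exists => /forallP col0.
have /matrixP/(_ j j) := mulVmx Mu; rewrite !mxE eqxx big1 => [/eqP|i _].
  by rewrite eq_sym oner_eq0.
by have := col0 i; rewrite negbK => /eqP ->; rewrite mulr0.
Qed.

End UnitMatrix.

Section PermutationMatrix.

Variables (R : nzRingType) (n : nat).
Implicit Type A : 'M[R]_n.

Lemma is_perm_mx_of_support A (f : 'I_n -> 'I_n) :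
  injective f -> (forall i, \sum_j A i j = 1) ->
  (forall i j, A i j != 0 -> j = f i) -> is_perm_mx A.
Proof.
move=> f_inj A1 Af; apply/existsP; exists (perm f_inj); apply/eqP/matrixP => i j.
have A_off k : k != f i -> A i k = 0.
  by move=> kf; have [//|/Af ki] := eqVneq (A i k) 0; rewrite ki eqxx in kf.
rewrite !mxE permE; have [<-|fj] := eqVneq (f i) j; last by rewrite A_off // eq_sym.
by rewrite -(A1 i) (bigD1 (f i)) //= big1 ?addr0 // => k /A_off.
Qed.

Lemma is_perm_mx_of_row_match q A (V U : 'M[R]_(n, q)) :
  injective (fun i => row i V) -> injective (fun i => row i U) ->
  (forall i, \sum_j A i j = 1) ->
  (forall i j, A i j != 0 -> row j V = row i U) -> is_perm_mx A.
Proof.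
move=> V_inj U_inj A1 match_AVU.
have row_neq0 i : exists j, A i j != 0.
  apply/existsP; apply: contraT; rewrite negb_exists => /forallP row0.
  have := A1 i; rewrite big1 => [/eqP|j _]; first by rewrite eq_sym oner_eq0.
  by apply/eqP; rewrite -[_ == _]negbK row0.
pose f i := xchoose (row_neq0 i); have Af i : A i (f i) != 0 := xchooseP (row_neq0 i).
apply: (@is_perm_mx_of_support _ f) => // [i i' f_ii'|i j Aij].
  by apply: U_inj; rewrite -(match_AVU _ _ (Af i)) -(match_AVU _ _ (Af i')) f_ii'.
by apply: V_inj; rewrite (match_AVU _ _ Aij) (match_AVU _ _ (Af i)).
Qed.

End PermutationMatrix.

Theorem theorem7 (R : realFieldType) (K : nat) (hK : (2 <= K)%N)
  (W W' : 'M[R]_K) :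
  row_stochastic W -> row_stochastic W' ->
  W \in unitmx -> W' \in unitmx ->
  (forall i j, Phi W i j <= Phi (W *m W') i j) /\
  ((forall i j, Phi (W *m W') i j = Phi W i j) <-> is_perm_mx W').
Proof.
move=> [W0 _] [W'0 W'1] Wu W'u.
set V := invmx (W *m W').
have WV : invmx W = W' *m V by rewrite mulmx_invmx_mul.
have gap k l : Phi (W *m W') k l - Phi W k l = \sum_n W k n * mxvar W' V n l.
  by rewrite /Phi WV mulmx_hadamard_gap.
have var_ge0 n l : 0 <= mxvar W' V n l by apply: mxvar_ge0.
split=> [k l|]; first by rewrite -subr_ge0 gap sumr_ge0 // => n _; rewrite mulr_ge0.
split=> [Phi_eq | /existsP[s /eqP W's] k l]; last first.
  by apply/eqP; rewrite -subr_eq0 gap W's big1 // => n _; rewrite mxvar_perm mulr0.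
have var0 n l : mxvar W' V n l = 0.
  have [k Wkn] := unitmx_col_neq0 n Wu.
  have /esym := gap k l; rewrite Phi_eq subrr.
  move=> /(psumr_eq0P (fun i _ => mulr_ge0 (W0 k i) (var_ge0 i l))).
  by move=> /(_ n isT)/eqP; rewrite mulf_eq0 (negbTE Wkn) => /eqP.
apply: (is_perm_mx_of_row_match (V := V) (U := invmx W)) => //.
- by apply: unitmx_row_inj; rewrite unitmx_inv unitmx_mul Wu.
- by apply: unitmx_row_inj; rewrite unitmx_inv.
- move=> n m W'nm; apply/rowP => l; rewrite !mxE WV.
  exact: mxvar_eq0 W'0 (var0 n l) W'nm.
Qed.
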